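(* Let $\psi,\varphi$ be metric formulas, $m\in\mathbb{N}$ and $n\in\mathbb{N}\cup\{\omega\}$. Then, with respect to strict timed traces, for all $i\in[m,n)$: $$\psi\,\mathsf{U}_{[m,n)}\,\varphi\equiv(\psi\,\mathsf{U}_{[m,i)}\,\varphi)\vee(\psi\,\mathsf{U}_{[i,n)}\,\varphi),\qquad \psi\,\mathsf{R}_{[m,n)}\,\varphi\equiv(\psi\,\mathsf{R}_{[m,i)}\,\varphi)\wedge(\psi\,\mathsf{R}_{[i,n)}\,\varphi),$$ and likewise $\psi\,\mathsf{S}_{[m,n)}\,\varphi\equiv(\psi\,\mathsf{S}_{[m,i)}\,\varphi)\vee(\psi\,\mathsf{S}_{[i,n)}\,\varphi)$ and $\psi\,\mathsf{T}_{[m,n)}\,\varphi\equiv(\psi\,\mathsf{T}_{[m,i)}\,\varphi)\wedge(\psi\,\mathsf{T}_{[i,n)}\,\varphi)$.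
   Context: Write $[m,n)=\{i\in\mathbb{N}\mid m\le i<n\}$, $(m,n]=\{i\in\mathbb{N}\mid m<i\le n\}$. Metric formulas over a set of atoms $\mathcal{A}$: $\varphi::=p\mid\bot\mid\varphi_1\wedge\varphi_2\mid\varphi_1\vee\varphi_2\mid\varphi_1\to\varphi_2\mid\bullet_I\varphi\mid\varphi_1\mathsf{S}_I\varphi_2\mid\varphi_1\mathsf{T}_I\varphi_2\mid\circ_I\varphi\mid\varphi_1\mathsf{U}_I\varphi_2\mid\varphi_1\mathsf{R}_I\varphi_2$, $p\in\mathcal{A}$, $I=[m,n)$, $m\in\mathbb{N}$, $n\in\mathbb{N}\cup\{\omega\}$. A timed HT-trace of length $\lambda\in\mathbb{N}\cup\{\omega\}$ is $\mathbf{M}=(\langle\mathbf{H},\mathbf{T}\rangle,\tau)$ with $H_i\subseteq T_i\subseteq\mathcal{A}$ for $i\in[0,\lambda)$, $\tau:[0,\lambda)\to\mathbb{N}$, $\tau(0)=0$, $\tau(i)\le\tau(i+1)$; strict if $\tau(i)<\tau(i+1)$ whenever $i+1<\lambda$. Satisfaction at $k\in[0,\lambda)$: $\bot$ never; $p$ iff $p\in H_k$; $\wedge,\vee$ usual; $\varphi\to\psi$ iff for both $\mathbf{M}'=\mathbf{M}$ and $\mathbf{M}'=(\langle\mathbf{T},\mathbf{T}\rangle,\tau)$, $\mathbf{M}',k\not\models\varphi$ or $\mathbf{M}',k\models\psi$; $\bullet_I\varphi$ iff $k>0$, $\mathbf{M},k-1\models\varphi$, $\tau(k)-\tau(k-1)\in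 I$; $\varphi\mathsf{S}_I\psi$ iff for some $j\in[0,k]$ with $\tau(k)-\tau(j)\in I$, $\mathbf{M},j\models\psi$ and $\mathbf{M},i\models\varphi$ for all $i\in(j,k]$; $\varphi\mathsf{T}_I\psi$ iff for all $j\in[0,k]$ with $\tau(k)-\tau(j)\in I$, $\mathbf{M},j\models\psi$ or $\mathbf{M},i\models\varphi$ for some $i\in(j,k]$; $\circ_I\varphi$ iff $k+1<\lambda$, $\mathbf{M},k+1\models\varphi$, $\tau(k+1)-\tau(k)\in I$; $\varphi\mathsf{U}_I\psi$ iff for some $j\in[k,\lambda)$ with $\tau(j)-\tau(k)\in I$, $\mathbf{M},j\models\psi$ and $\mathbf{M},i\models\varphi$ for all $i\in[k,j)$; $\varphi\mathsf{R}_I\psi$ iff for all $j\in[k,\lambda)$ with $\tau(j)-\tau(k)\in I$, $\mathbf{M},j\models\psi$ or $\mathbf{M},i\models\varphi$ for some $i\in[k,j)$. $\alpha\equiv\beta$ (w.r.t. strict traces) means: for every strict timed HT-trace $\mathbf{M}$ of any length $\lambda$ and every $k\in[0,\lambda)$, $\mathbf{M},k\models\alpha$ iff $\mathbf{M},k\models\beta$. *)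

From Stdlib Require Import Arith Lia.

Inductive natw : Type := Fin (n : nat) | Omega.

Definition ltw (i : nat) (n : natw) : Prop :=
  match n with Fin n' => i < n' | Omega => True end.

Record interval : Type := Itv { ilo : nat; ihi : natw }.

Definition in_itv (d : nat) (Iv : interval) : Prop :=
  ilo Iv <= d /\ ltw d (ihi Iv).

Inductive formula (A : Type) : Type :=
| Atom : A -> formula A
| Bot : formula A
| And : formula A -> formula A -> formula A
| Or : formula A -> formula A -> formula A
| Impl : formula A -> formula A -> formula A
| Prev : interval -> formula A -> formula A
| Since : interval -> formula A -> formula A -> formula A
| Trigger : interval -> formula A -> formula A -> formula A
| Next : interval -> formula A -> formula A
| Until : interval -> formula A -> formula A -> formula A
| Release : interval -> formula A -> formula A -> formula A.

Arguments Atom {A}. Arguments Bot {A}. Arguments And {A}. Arguments Or {A}.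
Arguments Impl {A}. Arguments Prev {A}. Arguments Since {A}.
Arguments Trigger {A}. Arguments Next {A}. Arguments Until {A}.
Arguments Release {A}.

(* A timed HT-trace of length lam: H i ⊆ T i for i < lam, tau 0 = 0,
   tau monotone on [0, lam).  Values outside [0, lam) are irrelevant. *)
Record trace (A : Type) : Type := Trace {
  tlen : natw;
  tH : nat -> A -> Prop;
  tT : nat -> A -> Prop;
  ttau : nat -> nat
}.
Arguments tlen {A}. Arguments tH {A}. Arguments tT {A}. Arguments ttau {A}.
Arguments Trace {A}.

Definition timed_ht_trace {A : Type} (M : trace A) : Prop :=
  (forall i, ltw i (tlen M) -> forall p, tH M i p -> tT M i p) /\
  ttau M 0 = 0 /\
  (forall i, ltw (S i) (tlen M) -> ttau M i <= ttau M (S i)).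

Definition strict_trace {A : Type} (M : trace A) : Prop :=
  timed_ht_trace M /\
  (forall i, ltw (S i) (tlen M) -> ttau M i < ttau M (S i)).

(* Satisfaction; the "here" component H varies (for implication we also
   evaluate in ⟨T,T⟩), while T, tau and the length lam are fixed. *)
Fixpoint sat_ {A : Type} (lam : natw) (T : nat -> A -> Prop) (tau : nat -> nat)
    (H : nat -> A -> Prop) (k : nat) (f : formula A) : Prop :=
  match f with
  | Atom p => H k p
  | Bot => False
  | And f1 f2 => sat_ lam T tau H k f1 /\ sat_ lam T tau H k f2
  | Or f1 f2 => sat_ lam T tau H k f1 \/ sat_ lam T tau H k f2
  | Impl f1 f2 =>
      (~ sat_ lam T tau H k f1 \/ sat_ lam T tau H k f2) /\
      (~ sat_ lam T tau T k f1 \/ sat_ lam T tau T k f2)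
  | Prev J f1 =>
      0 < k /\ sat_ lam T tau H (k - 1) f1 /\ in_itv (tau k - tau (k - 1)) J
  | Since J f1 f2 =>
      exists j, j <= k /\ in_itv (tau k - tau j) J /\ sat_ lam T tau H j f2 /\
        forall i, j < i <= k -> sat_ lam T tau H i f1
  | Trigger J f1 f2 =>
      forall j, j <= k -> in_itv (tau k - tau j) J ->
        sat_ lam T tau H j f2 \/ exists i, j < i <= k /\ sat_ lam T tau H i f1
  | Next J f1 =>
      ltw (S k) lam /\ sat_ lam T tau H (S k) f1 /\ in_itv (tau (S k) - tau k) J
  | Until J f1 f2 =>
      exists j, k <= j /\ ltw j lam /\ in_itv (tau j - tau k) J /\
        sat_ lam T tau H j f2 /\ forall i, k <= i < j -> sat_ lam T tau H i f1
  | Release J f1 f2 =>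
      forall j, k <= j -> ltw j lam -> in_itv (tau j - tau k) J ->
        sat_ lam T tau H j f2 \/ exists i, k <= i < j /\ sat_ lam T tau H i f1
  end.

Definition sat {A : Type} (M : trace A) (k : nat) (f : formula A) : Prop :=
  sat_ (tlen M) (tT M) (ttau M) (tH M) k f.

Definition equiv_strict {A : Type} (a b : formula A) : Prop :=
  forall M : trace A, strict_trace M ->
    forall k, ltw k (tlen M) -> (sat M k a <-> sat M k b).

(* The interval [m,n) is the disjoint union of [m,i) and [i,n), and the
   operators only consult their interval through the test d ∈ I on the
   distance d = |τ(j) − τ(k)|.  The witness j of U and S therefore lies in one
   of the two halves, while the universal quantifier of R and T splits into
   one for each half. *)
From Stdlib Require Import Arith Lia.

Lemma in_itv_split (m i d : nat) (n : natw) : m <= i -> ltw i n ->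
  in_itv d (Itv m n) <-> in_itv d (Itv m (Fin i)) \/ in_itv d (Itv i n).
Proof.
  unfold in_itv; destruct n as [n|]; simpl; intros Hmi Hin; split.
  - destruct (lt_dec d i); [left | right]; lia.
  - lia.
  - destruct (lt_dec d i); [left | right]; lia.
  - intros [Hd | Hd]; lia.
Qed.

Section IntervalUnion.

Variables (A : Type) (lam : natw) (T H : nat -> A -> Prop) (tau : nat -> nat).
Variables (k : nat) (psi phi : formula A) (I J1 J2 : interval).
Hypothesis in_itv_union : forall d, in_itv d I <-> in_itv d J1 \/ in_itv d J2.

Let sat_at := sat_ lam T tau H k.

Lemma sat_Until_union :
  sat_at (Until I psi phi) <-> sat_at (Or (Until J1 psi phi) (Until J2 psi phi)).
Proof.
  unfold sat_at; simpl; split.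
  - intros (j & Hkj & Hj & Hd & Hphi & Hpsi).
    destruct (proj1 (in_itv_union _) Hd); [left | right]; exists j; auto.
  - intros [(j & Hkj & Hj & Hd & Hphi & Hpsi) | (j & Hkj & Hj & Hd & Hphi & Hpsi)];
      exists j; repeat split; auto; apply in_itv_union; auto.
Qed.

Lemma sat_Release_union :
  sat_at (Release I psi phi) <-> sat_at (And (Release J1 psi phi) (Release J2 psi phi)).
Proof.
  unfold sat_at; simpl; split.
  - intros HR; split; intros j Hkj Hj Hd; apply HR; auto; apply in_itv_union; auto.
  - intros [HR1 HR2] j Hkj Hj Hd.
    destruct (proj1 (in_itv_union _) Hd); [apply HR1 | apply HR2]; auto.
Qed.

Lemma sat_Since_union :
  sat_at (Since I psi phi) <-> sat_at (Or (Since J1 psi phi) (Since J2 psi phi)).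
Proof.
  unfold sat_at; simpl; split.
  - intros (j & Hjk & Hd & Hphi & Hpsi).
    destruct (proj1 (in_itv_union _) Hd); [left | right]; exists j; auto.
  - intros [(j & Hjk & Hd & Hphi & Hpsi) | (j & Hjk & Hd & Hphi & Hpsi)];
      exists j; repeat split; auto; apply in_itv_union; auto.
Qed.

Lemma sat_Trigger_union :
  sat_at (Trigger I psi phi) <-> sat_at (And (Trigger J1 psi phi) (Trigger J2 psi phi)).
Proof.
  unfold sat_at; simpl; split.
  - intros HT; split; intros j Hjk Hd; apply HT; auto; apply in_itv_union; auto.
  - intros [HT1 HT2] j Hjk Hd.
    destruct (proj1 (in_itv_union _) Hd); [apply HT1 | apply HT2]; auto.
Qed.

End IntervalUnion.

Lemma equiv_strict_of_sat_iff (A : Type) (a b : formula A) :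
  (forall lam T tau H k, sat_ lam T tau H k a <-> sat_ lam T tau H k b) ->
  equiv_strict a b.
Proof. intros Hab M _ k _; apply Hab. Qed.

Theorem theorem3 (A : Type) (psi phi : formula A) (m : nat) (n : natw) :
  forall i : nat, m <= i -> ltw i n ->
    equiv_strict (Until (Itv m n) psi phi)
      (Or (Until (Itv m (Fin i)) psi phi) (Until (Itv i n) psi phi)) /\
    equiv_strict (Release (Itv m n) psi phi)
      (And (Release (Itv m (Fin i)) psi phi) (Release (Itv i n) psi phi)) /\
    equiv_strict (Since (Itv m n) psi phi)
      (Or (Since (Itv m (Fin i)) psi phi) (Since (Itv i n) psi phi)) /\
    equiv_strict (Trigger (Itv m n) psi phi)
      (And (Trigger (Itv m (Fin i)) psi phi) (Trigger (Itv i n) psi phi)).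
Proof.
  intros i Hmi Hin.
  pose proof (fun d => in_itv_split m i d n Hmi Hin) as Hsplit.
  split; [| split; [| split]]; apply equiv_strict_of_sat_iff; intros.
  - apply sat_Until_union, Hsplit.
  - apply sat_Release_union, Hsplit.
  - apply sat_Since_union, Hsplit.
  - apply sat_Trigger_union, Hsplit.
Qed.
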